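(* Let $M$ be a simple rank-$5$ binary matroid having a restriction isomorphic to $M(K_{3,3})$. Then $M$ is $(2,2)$-uniform if and only if $M$ is affine.
   Context: A matroid is $(2,2)$-uniform if it has no minor isomorphic to $U_{2,2}\oplus U_{0,2}$. $M(K_{3,3})$ is the cycle matroid of the complete bipartite graph $K_{3,3}$ (it has rank $5$). A binary matroid is affine if it has a representation over $GF(2)$ in which every column has last entry $1$; for simple rank-$5$ binary matroids this is equivalent to being a restriction of the affine geometry $AG(4,2)$. *)

From HB Require Import structures.
From mathcomp Require Import all_boot all_order all_algebra.
Set Implicit Arguments. Unset Strict Implicit. Unset Printing Implicit Defensive.
Import GRing.Theory.

Definition matroid_rank (E : finType) (r : {set E} -> nat) : Prop :=
  [/\ (forall X, r X <= #|X|),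
      (forall X Y : {set E}, X \subset Y -> r X <= r Y) &
      (forall X Y : {set E}, r (X :|: Y) + r (X :&: Y) <= r X + r Y)].

Definition vec_rank (K : fieldType) (E : finType) (n : nat)
  (A : E -> 'rV[K]_n) (X : {set E}) : nat :=
  \rank (\sum_(x in X) <<A x>>)%MS.

Definition binary (E : finType) (r : {set E} -> nat) : Prop :=
  exists n (A : E -> 'rV['F_2]_n), forall X, r X = vec_rank A X.

Definition affine (E : finType) (r : {set E} -> nat) : Prop :=
  exists n (A : E -> 'rV['F_2]_n.+1),
    (forall e, A e ord0 ord_max = 1%R) /\ (forall X, r X = vec_rank A X).

Definition simple_matroid (E : finType) (r : {set E} -> nat) : Prop :=
  (forall e, r [set e] = 1) /\ (forall e f, e != f -> r [set e; f] = 2).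

(* N (on ground set F, rank rN) is isomorphic to a minor of M:
   there is a set C (contracted) and an injection f : F -> E whose image
   is disjoint from C, such that (M / C) restricted to f(F) is isomorphic
   to N via f; all other elements are deleted. *)
Definition has_minor (E F : finType) (r : {set E} -> nat) (rN : {set F} -> nat)
  : Prop :=
  exists (C : {set E}) (f : F -> E),
    [/\ injective f, [disjoint [set f x | x in F] & C] &
        forall X : {set F}, rN X = r (f @: X :|: C) - r C].

Definition has_restriction (E F : finType) (r : {set E} -> nat)
  (rN : {set F} -> nat) : Prop :=
  exists f : F -> E, injective f /\ forall X : {set F}, rN X = r (f @: X).

(* U_{2,2} (+) U_{0,2} on ground set 'I_4: elements 0,1 coloops, 2,3 loops. *)
Definition U22_U02_rank (X : {set 'I_4}) : nat :=
  #|X :&: [set (inord 0 : 'I_4); inord 1]|.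

Definition two_two_uniform (E : finType) (r : {set E} -> nat) : Prop :=
  ~ has_minor r U22_U02_rank.

Definition graph_rank (V Ed : finType) (ends : Ed -> V * V) (X : {set Ed}) : nat :=
  let adj := fun u v : V => [exists e in X,
      ((ends e).1 == u) && ((ends e).2 == v) ||
      ((ends e).1 == v) && ((ends e).2 == u)] in
  #|V| - #|[set [set w | connect adj v w] | v : V]|.

Definition K33_ends (e : 'I_3 * 'I_3) : ('I_3 + 'I_3) * ('I_3 + 'I_3) :=
  (inl e.1, inr e.2).

Definition MK33_rank : {set 'I_3 * 'I_3} -> nat := graph_rank K33_ends.

From HB Require Import structures.
From mathcomp Require Import all_boot all_order all_algebra.
From mathcomp Require Import zify.

(* Coordinatize M over GF(2)^5, taking a spanning tree of its K_{3,3} restriction as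
   basis; the vectors of the other edges of K_{3,3} are then forced, and all have odd
   weight.  If some vector x of M has even weight, contracting three suitable edges
   of K_{3,3} leaves two further edges as coloops and x and a fourth edge as loops,
   a U_{2,2} (+) U_{0,2} minor; if all weights are odd, appending an all-ones
   coordinate gives an affine representation.  Conversely, coordinates coming from an
   affine representation give odd weights, and a U_{2,2} (+) U_{0,2} minor M / C would
   need two odd vectors outside C in the span of C, where r(C) <= 3 since the two
   coloops add 2 to the rank.  But the odd vectors spanned by at most three odd
   vectors are these vectors and their sum. *)

Set Implicit Arguments. Unset Strict Implicit. Unset Printing Implicit Defensive.
Import GRing.Theory.

(** * Vectors of GF(2)^5 as boolean 5-tuples *)

(* This representation makes spans and ranks computable by [vm_compute]. *)
Definition bits5 := (bool * bool * bool * bool * bool)%type.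

Definition bits5_seq (m : bits5) : seq bool :=
  let: (a0, a1, a2, a3, a4) := m in [:: a0; a1; a2; a3; a4].

Definition bits5_of_seq (s : seq bool) : bits5 :=
  (nth false s 0, nth false s 1, nth false s 2, nth false s 3, nth false s 4).

Definition bxor (m m' : bits5) : bits5 :=
  let: (a0, a1, a2, a3, a4) := m in let: (b0, b1, b2, b3, b4) := m' in
  (a0 (+) b0, a1 (+) b1, a2 (+) b2, a3 (+) b3, a4 (+) b4).

Definition bzero : bits5 := (false, false, false, false, false).

Definition odd_bits (m : bits5) : bool :=
  let: (a0, a1, a2, a3, a4) := m in a0 (+) a1 (+) a2 (+) a3 (+) a4.

Lemma bxorK m : involutive (bxor m).
Proof. by case: m => [[[[a0 a1] a2] a3] a4] [[[[b0 b1] b2] b3] b4] /=; rewrite !addKb. Qed.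

Lemma bxor0 m : bxor m bzero = m.
Proof. by case: m => [[[[a0 a1] a2] a3] a4] /=; rewrite !addbF. Qed.

Lemma bxor_eq a w m : (bxor a w == m) = (w == bxor a m).
Proof. by apply/eqP/eqP => [<-|->]; rewrite bxorK. Qed.

Lemma odd_bxor m m' : odd_bits (bxor m m') = odd_bits m (+) odd_bits m'.
Proof. by case: m => [[[[[] []] []] []] []]; case: m' => [[[[[] []] []] []] []]. Qed.

Definition bools : seq bool := [:: true; false].

Fixpoint bool_seqs (n : nat) : seq (seq bool) :=
  if n is k.+1 then [seq b :: s | b <- bools, s <- bool_seqs k] else [:: [::]].

Lemma mem_bool_seqs n bs : size bs = n -> bs \in bool_seqs n.
Proof.
elim: n bs => [|n IHn] [|b bs] //= [sbs].
by case: b; rewrite !mem_cat map_f ?orbT ?IHn.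
Qed.

Definition all_bits : seq bits5 := map bits5_of_seq (bool_seqs 5).

Lemma mem_all_bits m : m \in all_bits.
Proof.
have -> : m = bits5_of_seq (bits5_seq m) by case: m => [[[[]]]].
by rewrite map_f ?mem_bool_seqs //; case: m => [[[[]]]].
Qed.

Fixpoint bspan (s : seq bits5) : seq bits5 :=
  if s is a :: l then bspan l ++ map (bxor a) (bspan l) else [:: bzero].

Fixpoint brank (s : seq bits5) : nat :=
  if s is a :: l then brank l + (a \notin bspan l) else 0.

Fixpoint bbasis (s : seq bits5) : seq bits5 :=
  if s is a :: l then (if a \in bspan l then bbasis l else a :: bbasis l) else [::].

Definition bsum (s : seq bits5) : bits5 := foldr bxor bzero s.

Lemma mem_bspan_cons a l m :
  (m \in bspan (a :: l)) = (m \in bspan l) || (bxor a m \in bspan l).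
Proof.
rewrite /= mem_cat; congr (_ || _).
by rewrite -[X in X \in map _ _](bxorK a m) (mem_map (can_inj (bxorK a))).
Qed.

Lemma size_bbasis s : size (bbasis s) = brank s.
Proof. by elim: s => //= a l IHl; case: ifP => _ /=; rewrite IHl ?addn0 ?addn1. Qed.

Lemma bbasis_sub s : {subset bbasis s <= s}.
Proof.
elim: s => //= a l IHl x; case: ifP => _; first by move/IHl; rewrite inE => ->; rewrite orbT.
by rewrite !inE => /orP[->|/IHl ->]; rewrite ?orbT.
Qed.

Lemma odd_bspan_size_le3 (B : seq bits5) w : size B <= 3 -> all odd_bits B ->
  odd_bits w -> w \in bspan B -> w \notin B -> w = bsum B.
Proof.
case: B => [|a [|b [|c [|? ?]]]] // _; rewrite [all _ _]/= ?andbT.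
all: move=> oB ow + nB; rewrite ?mem_bspan_cons /= !inE ?bxor_eq ?bxor0.
all: repeat case/orP; move=> /eqP wE; move: ow oB nB; rewrite wE ?inE ?eqxx ?orbT //=.
all: by rewrite odd_bxor => + /and3P[oa ob oc]; rewrite ?oa ?ob ?oc.
Qed.

(** * Row spaces *)

Section RowSpans.
Variable F : fieldType.
Local Open Scope ring_scope.

Definition span_seq n (s : seq 'rV[F]_n) : 'M[F]_n := (\sum_(v <- s) <<v>>)%MS.

Lemma span_seq_nil n : span_seq [::] = 0 :> 'M[F]_n.
Proof. by rewrite /span_seq big_nil. Qed.

Lemma span_seq_cons n (v : 'rV[F]_n) s : span_seq (v :: s) = (<<v>> + span_seq s)%MS.
Proof. by rewrite /span_seq big_cons. Qed.

Lemma span_seq_sup n (v : 'rV[F]_n) s : v \in s -> (v <= span_seq s)%MS.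
Proof.
elim: s => //= w s IHs; rewrite inE span_seq_cons => /orP[/eqP->|/IHs vs].
  by rewrite -genmxE addsmxSl.
by rewrite (submx_trans vs) ?addsmxSr.
Qed.

Lemma span_seq_sub m n (B : 'M[F]_(m, n)) s :
  {in s, forall v, v <= B}%MS -> (span_seq s <= B)%MS.
Proof.
elim: s => [|w s IHs] sB; first by rewrite span_seq_nil sub0mx.
rewrite span_seq_cons addsmx_sub genmxE sB ?mem_head // IHs // => v vs.
by rewrite sB // inE vs orbT.
Qed.

Lemma eqmx_span_rows m n (M : 'M[F]_(m, n)) :
  (M :=: span_seq [seq row i M | i <- enum 'I_m])%MS.
Proof.
apply/eqmxP/andP; split; last by apply: span_seq_sub => _ /mapP[i _ ->]; rewrite row_sub.
by apply/row_subP => i; rewrite span_seq_sup // (map_f (fun j => row j M)) ?mem_enum.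
Qed.

Lemma mxrank_adds_rV n (v : 'rV[F]_n) (S : 'M[F]_n) :
  \rank (<<v>> + S)%MS = (\rank S + ~~ (v <= S)%MS)%N.
Proof.
have [vS|vS] := boolP (v <= S)%MS.
  have /addsmx_idPr -> : (<<v>> <= S)%MS by rewrite genmxE.
  by rewrite addn0.
have sSvS := addsmxSr <<v>>%MS S.
have lt_S : (\rank S < \rank (<<v>> + S))%N.
  by rewrite ltn_neqAle (mxrank_leqif_sup sSvS) mxrankS // addsmx_sub genmxE (negbTE vS).
have le_S1 : (\rank (<<v>> + S) <= 1 + \rank S)%N.
  apply: leq_trans (mxrank_adds_leqif _ _) _.
  by rewrite mxrank_gen leq_add2r rank_leq_row.
lia.
Qed.

Lemma vec_rank_seq (E : finType) n (A : E -> 'rV[F]_n) (X : {set E}) (l : seq E) :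
  X =i l -> vec_rank A X = \rank (span_seq (map A l)).
Proof.
move=> Xl; apply/eqmx_rank/andP; split.
  by apply/sumsmx_subP => x xX; rewrite genmxE span_seq_sup // map_f -?Xl.
by apply: span_seq_sub => _ /mapP[x xl ->]; rewrite (sumsmx_sup x) ?Xl ?genmxE.
Qed.

Lemma vec_rank_mulmx (E : finType) n p (A : E -> 'rV[F]_n) (M : 'M[F]_(n, p)) X :
  row_free M -> vec_rank (fun x => A x *m M) X = vec_rank A X.
Proof.
move=> fM; rewrite /vec_rank -(mxrankMfree _ fM).
rewrite sumsmxMr_gen; congr (\rank _); apply: eq_bigr => x _.
by apply/genmxP/eqmxP/eqmx_sym/eqmxMr/genmxE.
Qed.

Lemma coordinatize (E : finType) n k (A : E -> 'rV[F]_n) (t : 'I_k -> E) :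
  (vec_rank A setT <= k)%N -> row_free (\matrix_i A (t i)) ->
  exists c : E -> 'rV[F]_k,
    [/\ forall x, A x = c x *m \matrix_i A (t i),
        forall X, vec_rank c X = vec_rank A X &
        forall i, c (t i) = delta_mx 0 i].
Proof.
set B := \matrix_i A (t i) => rA fB.
set SA := (\sum_(x in [set: E]) <<A x>>)%MS.
have sBA : (B <= SA)%MS.
  by apply/row_subP => i; rewrite rowK (sumsmx_sup (t i)) ?inE ?genmxE.
have sAB : (SA <= B)%MS.
  by rewrite -(mxrank_leqif_sup sBA) eqn_leq mxrankS // (eqP fB).
have AB x : (A x <= B)%MS.
  by rewrite (submx_trans _ sAB) // (sumsmx_sup x) ?inE ?genmxE.
have AcB x : A x = A x *m pinvmx B *m B by rewrite mulmxKpV.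
exists (fun x => A x *m pinvmx B); split => // [X|i].
  rewrite -(vec_rank_mulmx _ _ fB) /vec_rank; congr (\rank _).
  by apply: eq_bigr => x _; rewrite -AcB.
by apply: (row_free_inj fB); rewrite /= -AcB -rowE rowK.
Qed.

End RowSpans.

Section GF2Rows.
Local Open Scope ring_scope.

Lemma F2E (x : 'F_2) : x = (x == 1)%:R.
Proof. by case: x => [[|[|?]] Hx] //; apply: val_inj. Qed.

Lemma F2_natr_eq1 (b : bool) : ((b%:R : 'F_2) == 1) = b.
Proof. by case: b. Qed.

Lemma F2_natrD (b b' : bool) : (b%:R + b'%:R : 'F_2) = (b (+) b')%:R.
Proof. by case: b; case: b'; apply: val_inj. Qed.

Lemma F2_oppr (x : 'F_2) : - x = x.
Proof. by rewrite [x]F2E; case: (x == 1); apply: val_inj. Qed.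

Definition row_of_bits (m : bits5) : 'rV['F_2]_5 :=
  \row_(i < 5) (nth false (bits5_seq m) i)%:R.

Definition bits_of_row (v : 'rV['F_2]_5) : bits5 :=
  (v 0 (@Ordinal 5 0 isT) == 1, v 0 (@Ordinal 5 1 isT) == 1,
   v 0 (@Ordinal 5 2 isT) == 1, v 0 (@Ordinal 5 3 isT) == 1,
   v 0 (@Ordinal 5 4 isT) == 1).

Lemma bits_of_rowK : cancel bits_of_row row_of_bits.
Proof.
move=> v; apply/rowP => i; rewrite mxE [RHS]F2E.
have -> : (0 : 'I_1) = ord0 by apply: val_inj.
by case: i => [[|[|[|[|[|?]]]]] Hi] //=; congr (_%:R); congr (v _ _ == 1); apply: val_inj.
Qed.

Lemma row_of_bitsK : cancel row_of_bits bits_of_row.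
Proof. by case=> [[[[a0 a1] a2] a3] a4]; rewrite /bits_of_row !mxE /= !F2_natr_eq1. Qed.

Lemma row_of_bits_inj : injective row_of_bits.
Proof. exact: can_inj row_of_bitsK. Qed.

Lemma row_of_bitsD m m' : row_of_bits (bxor m m') = row_of_bits m + row_of_bits m'.
Proof.
case: m => [[[[a0 a1] a2] a3] a4]; case: m' => [[[[b0 b1] b2] b3] b4].
by apply/rowP => i; rewrite !mxE; case: i => [[|[|[|[|[|?]]]]] Hi] //=; rewrite F2_natrD.
Qed.

Lemma row_of_bits0 : row_of_bits bzero = 0.
Proof. by apply/rowP => i; rewrite !mxE; case: i => [[|[|[|[|[|?]]]]] Hi]. Qed.

Lemma sum_row_of_bits m : \sum_(j < 5) row_of_bits m 0 j = (odd_bits m)%:R.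
Proof.
case: m => [[[[a0 a1] a2] a3] a4].
by rewrite !big_ord_recl big_ord0 !mxE /= addr0 !F2_natrD /= !addbA.
Qed.

Lemma odd_bits_of_last1 n (B : 'M['F_2]_(5, n.+1)) (v : 'rV['F_2]_5) :
  (forall i, B i ord_max = 1) -> (v *m B) 0 ord_max = 1 -> odd_bits (bits_of_row v).
Proof.
move=> B1; rewrite mxE; under eq_bigr => j _ do rewrite B1 mulr1.
by rewrite -{1}(bits_of_rowK v) sum_row_of_bits => /eqP; rewrite F2_natr_eq1.
Qed.

Lemma F2_sub_adds_rV n (u v : 'rV['F_2]_n) (S : 'M['F_2]_n) :
  (u <= <<v>> + S)%MS = (u <= S)%MS || (u - v <= S)%MS.
Proof.
rewrite (adds_eqmx (genmxE v) (eqmx_refl S)); apply/idP/idP.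
  case/sub_addsmxP=> [[a w] /= ->].
  rewrite [a]mx11_scalar [a 0 0]F2E mul_scalar_mx; case: (a 0 0 == 1).
    by rewrite scale1r addrAC subrr add0r submxMl orbT.
  by rewrite scale0r add0r submxMl.
case/orP=> [uS|uvS]; first by rewrite (submx_trans uS) ?addsmxSr.
by rewrite -[u](subrK v) addrC addmx_sub_adds.
Qed.

Lemma bspanP m s : (row_of_bits m <= span_seq (map row_of_bits s))%MS = (m \in bspan s).
Proof.
elim: s m => [|a s IHs] m.
  by rewrite span_seq_nil submx0 inE -row_of_bits0 (inj_eq row_of_bits_inj).
rewrite span_seq_cons F2_sub_adds_rV mem_bspan_cons -!IHs.
suff -> : row_of_bits m - row_of_bits a = row_of_bits (bxor a m) by [].
by rewrite row_of_bitsD addrC; congr (_ + _); apply/rowP => i; rewrite mxE F2_oppr.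
Qed.

Lemma brankP s : \rank (span_seq (map row_of_bits s)) = brank s.
Proof.
elim: s => [|a s IHs] /=; first by rewrite span_seq_nil mxrank0.
by rewrite span_seq_cons mxrank_adds_rV IHs bspanP.
Qed.

Lemma bspan_sup a s : a \in s -> a \in bspan s.
Proof. by move=> a_s; rewrite -bspanP span_seq_sup ?map_f. Qed.

Lemma bspan_bxor a m l : a \in bspan l -> m \in bspan l -> bxor a m \in bspan l.
Proof. by rewrite -!bspanP row_of_bitsD => al ml; rewrite addmx_sub. Qed.

Lemma brank_dup a : (brank [:: a; a] <= 1)%N.
Proof.
rewrite -[brank _]/(brank [:: a] + (a \notin bspan [:: a]))%N bspan_sup ?mem_head //.
by rewrite addn0 /= leq_b1.
Qed.

Lemma bspan_bbasis s : bspan (bbasis s) =i bspan s.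
Proof.
elim: s => //= a l IHl m; case: ifP => al; last by rewrite mem_bspan_cons !IHl -mem_bspan_cons.
rewrite IHl mem_cat; case: (boolP (m \in bspan l)) => //= ml.
by apply/esym/negbTE; apply: contra ml => /mapP[k kl ->]; apply: bspan_bxor.
Qed.

Lemma vec_rank_bits (E : finType) (c : E -> 'rV['F_2]_5) (X : {set E}) (l : seq E) :
  X =i l -> vec_rank c X = brank (map (bits_of_row \o c) l).
Proof.
move=> Xl; rewrite (vec_rank_seq c Xl) -brankP -map_comp.
by congr (\rank (span_seq _)); apply: eq_map => x /=; rewrite bits_of_rowK.
Qed.

End GF2Rows.

(** * The cycle matroid of K_{3,3} *)

Lemma card_imset_filter (T U : finType) (F : T -> {set U}) (eT : seq T) (eU : seq U) :
  (forall x, x \in eT) -> (forall y, y \in eU) ->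
  #|[set F v | v : T]| = size (undup [seq [seq w <- eU | w \in F v] | v <- eT]).
Proof.
move=> eTP eUP; set back := fun S : {set U} => [seq w <- eU | w \in S].
have back_inj : injective back.
  move=> S1 S2 eqS; apply/setP => x.
  by have := congr1 (fun s => x \in s) eqS; rewrite !mem_filter eUP !andbT.
have -> : [seq back (F v) | v <- eT] = map back (map F eT) by rewrite -map_comp.
rewrite undup_map_inj // size_map -(card_uniqP (undup_uniq _)); apply: eq_card => S.
by rewrite mem_undup; apply/imsetP/mapP => -[x _ ->]; exists x.
Qed.

Lemma mem_imset_seq (T U : finType) (f : T -> U) (l : seq T) : f @: [set x in l] =i map f l.
Proof.
move=> y; apply/imsetP/mapP => -[x]; first by rewrite inE; exists x.
by exists x; rewrite ?inE.
Qed.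

(* Unlike [inord], this reduces under [vm_compute]. *)
Definition ord3 (i : nat) : 'I_3 := Ordinal (ltn_pmod i (isT : 0 < 3)).

Lemma ord3_val (i : 'I_3) : ord3 i = i.
Proof. by apply: val_inj; rewrite /= modn_small. Qed.

Definition edge (i j : nat) : 'I_3 * 'I_3 := (ord3 i, ord3 j).

Definition K33_vertices : seq ('I_3 + 'I_3) :=
  [seq inl (ord3 i) | i <- iota 0 3] ++ [seq inr (ord3 i) | i <- iota 0 3].

Lemma mem_K33_vertices v : v \in K33_vertices.
Proof.
rewrite mem_cat; case: v => i; rewrite -(ord3_val i).
  by rewrite (map_f (fun j => inl (ord3 j))) // mem_iota /= ltn_ord.
by rewrite (map_f (fun j => inr (ord3 j))) ?orbT // mem_iota /= ltn_ord.
Qed.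

Definition K33_edges : seq ('I_3 * 'I_3) := [seq edge i j | i <- iota 0 3, j <- iota 0 3].

Lemma mem_K33_edges e : e \in K33_edges.
Proof.
case: e => i j; rewrite -(ord3_val i) -(ord3_val j).
by rewrite /K33_edges (allpairs_f edge) // mem_iota /= ltn_ord.
Qed.

Definition K33_adj (l : seq ('I_3 * 'I_3)) : rel ('I_3 + 'I_3) := fun u v =>
  has (fun e => ((K33_ends e).1 == u) && ((K33_ends e).2 == v) ||
                ((K33_ends e).1 == v) && ((K33_ends e).2 == u)) l.

Definition K33_nbrs (e : rel ('I_3 + 'I_3)) (x : 'I_3 + 'I_3) : seq ('I_3 + 'I_3) :=
  [seq y <- K33_vertices | e x y].

Definition in_vertex_order (c : seq ('I_3 + 'I_3)) : seq ('I_3 + 'I_3) :=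
  [seq w <- K33_vertices | w \in c].

Definition K33_ncomp (l : seq ('I_3 * 'I_3)) : nat :=
  size (undup [seq in_vertex_order (dfs (K33_nbrs (K33_adj l)) 6 [::] v) | v <- K33_vertices]).

Lemma K33_dfsP e x y : (y \in dfs (K33_nbrs e) 6 [::] x) = connect e x y.
Proof.
rewrite -[6]/(3 + 3) -[in X in dfs _ X](card_ord 3) -card_sum.
have eE : grel (K33_nbrs e) =2 e.
  by move=> a b; rewrite /grel /= mem_filter mem_K33_vertices andbT.
by apply/dfsP/connectP => -[p pP ->]; exists p; rewrite ?(eq_path eE) // -(eq_path eE).
Qed.

Lemma MK33_rankE (X : {set 'I_3 * 'I_3}) (l : seq ('I_3 * 'I_3)) :
  X =i l -> MK33_rank X = 6 - K33_ncomp l.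
Proof.
move=> Xl; rewrite /MK33_rank /graph_rank card_sum !card_ord.
rewrite (card_imset_filter _ mem_K33_vertices mem_K33_vertices) /K33_ncomp.
congr (_ - size (undup _)); apply: eq_map => v; apply: eq_filter => w.
rewrite inE K33_dfsP (@eq_connect _ _ (K33_adj l)) // => a b.
apply/existsP/hasP => -[e]; first by case/andP => eX; exists e; rewrite -?Xl.
by move=> el ?; exists e; rewrite Xl el.
Qed.

Definition K33_tree : 5.-tuple ('I_3 * 'I_3) :=
  [tuple edge 0 0; edge 0 1; edge 0 2; edge 1 0; edge 2 0].

Lemma K33_tree_rank : 6 - K33_ncomp K33_tree = 5.
Proof. by vm_compute. Qed.

Definition unit_bits : seq bits5 :=
  [:: (true, false, false, false, false); (false, true, false, false, false);
      (false, false, true, false, false); (false, false, false, true, false);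
      (false, false, false, false, true)].

(* Coordinates of the edges of K_{3,3} in the basis [K33_tree]: for i, j > 0 the
   fundamental cycle of (i, j) is (i, j), (i, 0), (0, 0), (0, j). *)
Definition K33_code (e : 'I_3 * 'I_3) : bits5 :=
  match val e.1, val e.2 with
  | 0, 0 => (true, false, false, false, false)
  | 0, 1 => (false, true, false, false, false)
  | 0, _ => (false, false, true, false, false)
  | 1, 0 => (false, false, false, true, false)
  | 1, 1 => (true, true, false, true, false)
  | 1, _ => (true, false, true, true, false)
  | _, 0 => (false, false, false, false, true)
  | _, 1 => (true, true, false, false, true)
  | _, _ => (true, false, true, false, true)
  end.

Definition drop_at (T : Type) (i : nat) (s : seq T) : seq T :=
  mask [seq j != i | j <- iota 0 (size s)] s.

Lemma drop_at_map (T U : Type) (f : T -> U) i (s : seq T) :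
  drop_at i (map f s) = map f (drop_at i s).
Proof. by rewrite /drop_at size_map map_mask. Qed.

(* These ranks determine m: its i-th coordinate is 1 iff the i-th entry is 5. *)
Definition unit_ranks (m : bits5) : seq nat :=
  [seq brank (rcons (drop_at i unit_bits) m) | i <- iota 0 5].

Definition K33_tree_ranks (e : 'I_3 * 'I_3) : seq nat :=
  [seq 6 - K33_ncomp (rcons (drop_at i K33_tree) e) | i <- iota 0 5].

Definition codes_with_unit_ranks (rs : seq nat) : seq bits5 :=
  [seq m <- all_bits | unit_ranks m == rs].

Lemma K33_code_unique :
  all (fun e => codes_with_unit_ranks (K33_tree_ranks e) == [:: K33_code e]) K33_edges.
Proof. by vm_compute. Qed.

(** * Certificates for U_{2,2} (+) U_{0,2} minors *)

Lemma card_setI2 (T : finType) (X : {set T}) a b : a != b ->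
  #|X :&: [set a; b]| = (a \in X) + (b \in X).
Proof.
move=> ab; have uab : uniq [:: a; b] by rewrite /= inE ab.
rewrite (@eq_card _ _ (mem [seq x <- [:: a; b] | x \in X])) => [|x]; last first.
  by rewrite !inE mem_filter !inE andbC.
by rewrite (card_uniqP _) ?filter_uniq //=; case: (a \in X); case: (b \in X).
Qed.

Lemma U22_U02_rankE (X : {set 'I_4}) : U22_U02_rank X = (inord 0 \in X) + (inord 1 \in X).
Proof. by rewrite /U22_U02_rank card_setI2 // -val_eqE /= !inordK. Qed.

Lemma nth_mem_enum_ord n (X : {set 'I_n.+1}) k : k < n.+1 ->
  nth false [seq i \in X | i <- enum 'I_n.+1] k = (inord k \in X).
Proof.
move=> lt_k; rewrite (nth_map ord0) ?size_enum_ord //; congr (_ \in X).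
by apply: ord_inj; rewrite nth_enum_ord ?inordK.
Qed.

(* Contracting the vectors [S], the first two of the four vectors [ms] are coloops
   and the last two are loops. *)
Definition minor_certificate (S ms : seq bits5) : bool :=
  [&& size ms == 4, uniq ms, all (fun m => m \notin S) ms &
      all (fun bs => brank (mask bs ms ++ S) == brank S + nth false bs 0 + nth false bs 1)
        (bool_seqs 4)].

Lemma minor_of_certificate (E : finType) (r : {set E} -> nat) (c : E -> 'rV['F_2]_5)
    (lC es : seq E) :
  (forall X, r X = vec_rank c X) ->
  minor_certificate (map (bits_of_row \o c) lC) (map (bits_of_row \o c) es) ->
  has_minor r U22_U02_rank.
Proof.
set G := bits_of_row \o c => rc cert.
have es4 : size es == 4 by case/and4P: cert; rewrite size_map.
move: cert; have [t <-] : exists t : 4.-tuple E, tval t = es by exists (Tuple es4).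
case/and4P => _ /map_uniq/tuple_uniqP t_inj notin_lC ranks.
exists [set x in lC], (tnth t); split => // [|X].
  apply/pred0P => y /=; rewrite !inE; apply/andP => -[/imsetP[i _ ->] ilC].
  by have /negP[] := allP notin_lC _ (map_f G (mem_tnth i t)); rewrite map_f.
set bX := [seq i \in X | i <- enum 'I_4].
have XlC : tnth t @: X :|: [set x in lC] =i mask bX t ++ lC.
  move=> y; rewrite !inE mem_cat -(map_tnth_enum t) -map_mask -filter_mask.
  congr (_ || _); apply/imsetP/mapP => -[i].
    by move=> iX ->; exists i; rewrite // mem_filter iX mem_enum.
  by rewrite mem_filter => /andP[iX _] ->; exists i.
rewrite U22_U02_rankE !rc (vec_rank_bits c XlC) (@vec_rank_bits _ c _ lC) => [|y]; last first.
  by rewrite inE.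
rewrite map_cat -/G map_mask.
have bX4 : size bX = 4 by rewrite size_map size_enum_ord.
have /eqP-> := allP ranks bX (mem_bool_seqs bX4).
by rewrite !nth_mem_enum_ord // -addnA addKn.
Qed.

(* For a nonzero vector p of even weight: the edges to contract, then the two
   coloops and the loop that accompanies p in the resulting minor. *)
Definition even_witness (p : bits5) : seq ('I_3 * 'I_3) * seq ('I_3 * 'I_3) :=
  match p with
  | (true, true, false, false, false) =>
      ([:: edge 0 0; edge 0 1; edge 1 0], [:: edge 0 2; edge 2 0; edge 1 1])
  | (true, false, true, false, false) =>
      ([:: edge 0 0; edge 0 2; edge 1 0], [:: edge 0 1; edge 2 0; edge 1 2])
  | (false, true, true, false, false) =>
      ([:: edge 0 1; edge 0 2; edge 1 1], [:: edge 0 0; edge 2 0; edge 1 2])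
  | (true, false, false, true, false) =>
      ([:: edge 0 0; edge 0 1; edge 1 0], [:: edge 0 2; edge 2 0; edge 1 1])
  | (false, true, false, true, false) =>
      ([:: edge 0 0; edge 0 1; edge 1 0], [:: edge 0 2; edge 2 0; edge 1 1])
  | (false, false, true, true, false) =>
      ([:: edge 0 0; edge 0 2; edge 1 0], [:: edge 0 1; edge 2 0; edge 1 2])
  | (true, true, true, true, false) =>
      ([:: edge 0 1; edge 0 2; edge 1 1], [:: edge 0 0; edge 2 0; edge 1 2])
  | (true, false, false, false, true) =>
      ([:: edge 0 0; edge 0 1; edge 2 0], [:: edge 0 2; edge 1 0; edge 2 1])
  | (false, true, false, false, true) =>
      ([:: edge 0 0; edge 0 1; edge 2 0], [:: edge 0 2; edge 1 0; edge 2 1])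
  | (false, false, true, false, true) =>
      ([:: edge 0 0; edge 0 2; edge 2 0], [:: edge 0 1; edge 1 0; edge 2 2])
  | (true, true, true, false, true) =>
      ([:: edge 0 1; edge 0 2; edge 2 1], [:: edge 0 0; edge 1 0; edge 2 2])
  | (false, false, false, true, true) =>
      ([:: edge 1 0; edge 2 0; edge 1 1], [:: edge 0 0; edge 0 2; edge 2 1])
  | (true, true, false, true, true) =>
      ([:: edge 1 0; edge 2 0; edge 1 1], [:: edge 0 0; edge 0 2; edge 2 1])
  | (true, false, true, true, true) =>
      ([:: edge 1 0; edge 2 0; edge 1 2], [:: edge 0 0; edge 0 1; edge 2 2])
  | (false, true, true, true, true) =>
      ([:: edge 1 1; edge 1 2; edge 2 1], [:: edge 0 0; edge 0 1; edge 2 2])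
  | _ => ([::], [::])
  end.

Lemma even_witnessP :
  all (fun p => ~~ odd_bits p && (p != bzero) ==>
     minor_certificate (map K33_code (even_witness p).1)
                       (rcons (map K33_code (even_witness p).2) p)) all_bits.
Proof. by vm_compute. Qed.

(** * Coordinates adapted to the K_{3,3} restriction *)

Section Coordinates.
Local Open Scope ring_scope.

Lemma unit_bits_delta : [seq bits_of_row (delta_mx 0 i) | i <- enum 'I_5] = unit_bits.
Proof.
have -> : enum 'I_5 = [:: @Ordinal 5 0 isT; @Ordinal 5 1 isT; @Ordinal 5 2 isT;
                          @Ordinal 5 3 isT; @Ordinal 5 4 isT].
  by apply: (inj_map val_inj); rewrite val_enum_ord.
by rewrite /= /bits_of_row !mxE.
Qed.

Lemma K33_standard_rep (E : finType) (r : {set E} -> nat) (f : 'I_3 * 'I_3 -> E)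
    n (A : E -> 'rV['F_2]_n) :
  r [set: E] = 5%N -> (forall X, MK33_rank X = r (f @: X)) ->
  (forall X, r X = vec_rank A X) ->
  exists c : E -> 'rV['F_2]_5,
    [/\ forall x, A x = c x *m \matrix_i A (f (tnth K33_tree i)),
        forall X, r X = vec_rank c X &
        forall e, bits_of_row (c (f e)) = K33_code e].
Proof.
move=> rE rf rA.
have K33_brank (c : E -> 'rV['F_2]_5) : (forall X, r X = vec_rank c X) ->
    forall l, brank (map (bits_of_row \o c \o f) l) = (6 - K33_ncomp l)%N.
  move=> rc l; rewrite -(@MK33_rankE [set x in l]) => [|x]; last by rewrite inE.
  by rewrite rf rc (vec_rank_bits c (mem_imset_seq f l)) map_comp.
have [] := coordinatize (A := A) (t := f \o tnth K33_tree).
- by rewrite -rA rE.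
- rewrite /row_free (eqmx_span_rows _).
  have -> : [seq row i (\matrix_i A ((f \o tnth K33_tree) i)) | i <- enum 'I_5] =
            map A (map f K33_tree).
    by rewrite -(map_tnth_enum K33_tree) -!map_comp; apply: eq_map => i; rewrite /= rowK.
  rewrite -(vec_rank_seq A (mem_imset_seq f K33_tree)) -rA -rf.
  by rewrite (@MK33_rankE _ K33_tree) ?K33_tree_rank // => e; rewrite inE.
move=> c [Ac rc ct]; have {}rc X : r X = vec_rank c X by rewrite rA rc.
exists c; split => // e.
have tree_bits : map (bits_of_row \o c \o f) K33_tree = unit_bits.
  rewrite -unit_bits_delta -[in LHS](map_tnth_enum K33_tree) -map_comp.
  by apply: eq_map => i /=; rewrite ct.
have /eqP codesE := allP K33_code_unique e (mem_K33_edges e).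
apply/eqP; rewrite -mem_seq1 -codesE mem_filter mem_all_bits andbT; apply/eqP.
rewrite /unit_ranks /K33_tree_ranks -tree_bits; apply: eq_map => i.
by rewrite drop_at_map -map_rcons K33_brank.
Qed.

End Coordinates.

Section FiveDimensionalRep.
Local Open Scope ring_scope.

Variables (E : finType) (r : {set E} -> nat) (c : E -> 'rV['F_2]_5).
Hypothesis rc : forall X, r X = vec_rank c X.

Lemma bits_of_row_neq0 x : r [set x] = 1%N -> bits_of_row (c x) != bzero.
Proof.
rewrite rc (@vec_rank_bits _ c _ [:: x]) => [|y]; last by rewrite !inE.
by rewrite /= inE; case: (_ == _).
Qed.

Lemma bits_of_row_inj :
  (forall x y, x != y -> r [set x; y] = 2%N) -> injective (bits_of_row \o c).
Proof.
move=> r2 x y Gxy; apply/eqP/negPn/negP => /r2.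
rewrite rc (@vec_rank_bits _ c _ [:: x; y]) => [|z]; last by rewrite !inE.
rewrite [map _ _]/=; rewrite /= in Gxy; rewrite Gxy => rank2.
by have := brank_dup (bits_of_row (c y)); rewrite rank2.
Qed.

Lemma minor_of_even_bits (f : 'I_3 * 'I_3 -> E) x :
  (forall e, bits_of_row (c (f e)) = K33_code e) -> r [set x] = 1%N ->
  ~~ odd_bits (bits_of_row (c x)) -> has_minor r U22_U02_rank.
Proof.
move=> cf /bits_of_row_neq0 x_nz x_even.
have /implyP := allP even_witnessP _ (mem_all_bits (bits_of_row (c x))).
rewrite x_even x_nz => /(_ isT).
case: (even_witness (bits_of_row (c x))) => C es cert.
apply: (minor_of_certificate (lC := map f C) (es := rcons (map f es) x) rc).
by rewrite map_rcons -!map_comp !(eq_map cf).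
Qed.

Lemma affine_of_odd_bits : (forall x, odd_bits (bits_of_row (c x))) -> affine r.
Proof.
move=> odd_c; pose M : 'M['F_2]_(5, 5 + 1) := row_mx 1%:M (const_mx 1).
have M_free : row_free M.
  rewrite /row_free eqn_leq rank_leq_row /=.
  have := mxrankM_maxl M (col_mx 1%:M 0).
  by rewrite mul_row_col mulmx0 addr0 mulmx1 mxrank1.
have M_last (v : 'rV['F_2]_5) : (v *m M) 0 (rshift 5%N (ord0 : 'I_1)) = \sum_j v 0 j.
  by rewrite /M mul_mx_row row_mxEr mxE; apply: eq_bigr => j _; rewrite mxE mulr1.
exists 5%N, (fun x => c x *m M); split => [x|X]; last by rewrite rc vec_rank_mulmx.
have -> : (ord_max : 'I_6) = rshift 5%N (ord0 : 'I_1) by apply: val_inj.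
by rewrite M_last -(bits_of_rowK (c x)) sum_row_of_bits odd_c.
Qed.

Lemma two_two_uniform_of_odd_bits :
  (forall x y, x != y -> r [set x; y] = 2%N) -> (forall x, odd_bits (bits_of_row (c x))) ->
  two_two_uniform r.
Proof.
move=> r2 odd_c [C [g [g_inj gC rg]]].
set G := bits_of_row \o c; have G_inj : injective G := bits_of_row_inj r2.
set S := map G (enum C).
have rC : r C = brank S.
  by rewrite rc (@vec_rank_bits _ c _ (enum C)) // => y; rewrite mem_enum.
have rCx y : r (y |: C) = (brank S + (G y \notin bspan S))%N.
  by rewrite rc (@vec_rank_bits _ c _ (y :: enum C)) // => z; rewrite !inE mem_enum.
have S_le3 : (brank S <= 3)%N.
  move: (rg [set inord 0; inord 1]); rewrite U22_U02_rankE !inE !eqxx orbT -rC.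
  set X := (_ :|: C) => rX; have : (r X <= 5)%N by rewrite rc rank_leq_col.
  lia.
have loop k : (1 < k < 4)%N -> G (g (inord k)) \in bspan S.
  case/andP=> k_gt1 k_lt4; have := rg [set inord k].
  rewrite U22_U02_rankE !inE -!val_eqE /= !inordK // imset_set1 rCx -rC addKn.
  by rewrite (ltn_eqF (ltnW k_gt1)) (ltn_eqF k_gt1); case: (_ \in _).
have notin_S i : G (g i) \notin S.
  apply/mapP => -[y yC /G_inj gi_y]; move: yC; rewrite mem_enum -gi_y.
  by rewrite (disjointFr gC) // imset_f.
set B := bbasis S.
have oddB : all odd_bits B by apply/allP => _ /bbasis_sub/mapP[y _ ->]; apply: odd_c.
have loop_sum k : (1 < k < 4)%N -> G (g (inord k)) = bsum B.
  move=> k_loop; apply: odd_bspan_size_le3; rewrite ?size_bbasis ?bspan_bbasis ?loop ?odd_c //.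
  exact: contra (@bbasis_sub S _) (notin_S _).
have /G_inj/g_inj/(congr1 val) := etrans (loop_sum 2%N isT) (esym (loop_sum 3%N isT)).
by rewrite /= !inordK.
Qed.

End FiveDimensionalRep.

Theorem lemma4p3 (E : finType) (r : {set E} -> nat) :
  matroid_rank r -> binary r -> simple_matroid r -> r [set: E] = 5 ->
  has_restriction r MK33_rank ->
  (two_two_uniform r <-> affine r).
Proof.
move=> _ [n [A rA]] [r1 r2] rE [f [_ rf]].
have rep := K33_standard_rep rE rf.
split=> [uniform | [m [A' [A'_last rA']]]].
- have [c [_ rc cf]] := rep _ _ rA.
  apply: (affine_of_odd_bits rc) => x; apply/negPn/negP => x_even.
  exact: uniform (minor_of_even_bits rc cf (r1 x) x_even).
- have [c [A'c rc _]] := rep _ _ rA'.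
  apply: (two_two_uniform_of_odd_bits rc r2) => x.
  apply: (@odd_bits_of_last1 m (\matrix_i A' (f (tnth K33_tree i)))) => [i|].
    by rewrite mxE; apply: A'_last.
  by rewrite -A'c; apply: A'_last.
Qed.
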